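(* Let $a,b\in\mathbb F^*$, set $\hat a=a\,b\,\theta^n(b^{-1})$, and let $g\in\mathcal R$. Then $g$ is a right divisor of $x^n-a$ if and only if $gb$ is a right divisor of $x^n-\hat a$.
   Context: $\mathbb F$ is a finite field, $\theta\in\mathrm{Aut}(\mathbb F)$, $\mathcal R=\mathbb F[x;\theta]$ the skew polynomial ring (elements $\sum f_ix^i$ with left coefficients, multiplication determined by $xb=\theta(b)x$), $n\in\mathbb N$. $g$ is a right divisor of $f$ if $f=sg$ for some $s\in\mathcal R$. *)

(* Elements sum_i f_i x^i (left coefficients) are represented by their
   coefficient sequences, i.e. by values of {poly F}; addition is the usual
   one, and multiplication is the skew product determined by x b = theta(b) x:
     (sum_i f_i x^i) (sum_j g_j x^j) = sum_{i,j} f_i theta^i(g_j) x^(i+j). *)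
From HB Require Import structures.
From mathcomp Require Import all_boot all_order all_algebra all_field.
Set Implicit Arguments. Unset Strict Implicit. Unset Printing Implicit Defensive.
Import GRing.Theory.
Local Open Scope ring_scope.

Definition theta_pow (F : finFieldType) (theta : {rmorphism F -> F}) (i : nat)
  : F -> F := iter i theta.

Definition skew_mul (F : finFieldType) (theta : {rmorphism F -> F})
  (p q : {poly F}) : {poly F} :=
  \sum_(i < size p) \sum_(j < size q)
     (p`_i * theta_pow theta i q`_j) *: 'X^(i + j).

Definition skew_rdvd (F : finFieldType) (theta : {rmorphism F -> F})
  (g f : {poly F}) : Prop :=
  exists s : {poly F}, f = skew_mul theta s g.

(* Right multiplication by a nonzero constant b is invertible in F[x; theta]
   (with inverse right multiplication by b^-1) and commutes with left
   multiplication, by associativity.  Since x^n b = theta^n(b) x^n, we have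
   (x^n - a) b = theta^n(b) (x^n - ahat), so s g = x^n - a turns into
   (theta^n(b)^-1 s) (g b) = x^n - ahat, and conversely. *)
From HB Require Import structures.
From mathcomp Require Import all_boot all_order all_algebra all_field.
Import GRing.Theory.
Local Open Scope ring_scope.

Set Implicit Arguments.
Unset Strict Implicit.
Unset Printing Implicit Defensive.

Lemma sum_ord_widen (V : nmodType) (n m : nat) (G : nat -> V) :
  (n <= m)%N -> (forall i, (n <= i)%N -> G i = 0) ->
  \sum_(i < n) G i = \sum_(i < m) G i.
Proof.
move=> le_nm G0; rewrite (big_ord_widen m G le_nm) big_mkcond.
by apply: eq_bigr => i _; case: ltnP => // /G0 ->.
Qed.

Section SkewPolynomials.

Variables (F : finFieldType) (theta : {rmorphism F -> F}).
Local Notation tp := (theta_pow theta).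
Local Notation "p ** q" := (skew_mul theta p q) (at level 40, left associativity).

Lemma theta_pow_is_zmod_morphism i : zmod_morphism (tp i).
Proof.
by elim: i => [|i IH] x y //=; rewrite /theta_pow /= -/(tp i) IH rmorphB.
Qed.

Lemma theta_pow_is_monoid_morphism i : monoid_morphism (tp i).
Proof.
elim: i => // i [tp1 tpM]; split=> [|x y]; rewrite /theta_pow /= -!/(tp i).
  by rewrite tp1 rmorph1.
by rewrite tpM rmorphM.
Qed.

HB.instance Definition _ i :=
  GRing.isZmodMorphism.Build F F (tp i) (theta_pow_is_zmod_morphism i).
HB.instance Definition _ i :=
  GRing.isMonoidMorphism.Build F F (tp i) (theta_pow_is_monoid_morphism i).

Lemma theta_powD i j x : tp (i + j) x = tp i (tp j x).
Proof. exact: iterD. Qed.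

Lemma skew_mul_widen (p q : {poly F}) (m m' : nat) :
  (size p <= m)%N -> (size q <= m')%N ->
  p ** q = \sum_(i < m) \sum_(j < m') (p`_i * tp i q`_j) *: 'X^(i + j).
Proof.
move=> le_pm le_qm'.
transitivity (\sum_(i < size p) \sum_(j < m') (p`_i * tp i q`_j) *: 'X^(i + j)).
  apply: eq_bigr => i _.
  apply: (sum_ord_widen (G := fun j => (p`_i * tp i q`_j) *: 'X^(i + j))) => // j le_qj.
  by rewrite (nth_default _ le_qj) rmorph0 mulr0 scale0r.
apply: (sum_ord_widen (G := fun i =>
  \sum_(j < m') (p`_i * tp i q`_j) *: 'X^(i + j))) => // i le_pi.
by apply: big1 => j _; rewrite nth_default // mul0r scale0r.
Qed.

Lemma coef_skew_mul (p q : {poly F}) (m m' k : nat) :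
  (size p <= m)%N -> (size q <= m')%N ->
  (p ** q)`_k = \sum_(i < m) \sum_(j < m') (p`_i * tp i q`_j) * ((i + j)%N == k)%:R.
Proof.
move=> le_pm le_qm'; rewrite (skew_mul_widen le_pm le_qm') coef_sum.
apply: eq_bigr => i _; rewrite coef_sum; apply: eq_bigr => j _.
by rewrite coefZ coefXn eq_sym.
Qed.

Lemma skew_mulr_polyCE (p : {poly F}) (c : F) :
  p ** c%:P = \poly_(i < size p) (p`_i * tp i c).
Proof.
rewrite (skew_mul_widen (m := size p) (m' := 1)) ?size_polyC ?leq_b1 // poly_def.
by apply: eq_bigr => i _; rewrite big_ord1 coefC addn0.
Qed.

Lemma coef_skew_mulr_polyC (p : {poly F}) (c : F) k : (p ** c%:P)`_k = p`_k * tp k c.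
Proof.
by rewrite skew_mulr_polyCE coef_poly; case: ltnP => // /leq_sizeP->; rewrite ?mul0r.
Qed.

Lemma size_skew_mulr_polyC (p : {poly F}) (c : F) : (size (p ** c%:P) <= size p)%N.
Proof. by rewrite skew_mulr_polyCE size_poly. Qed.

Lemma skew_mulZl (d : F) (s g : {poly F}) : (d *: s) ** g = d *: (s ** g).
Proof.
rewrite (skew_mul_widen (m := size s) (m' := size g)) ?size_scale_leq //.
rewrite /skew_mul scaler_sumr; apply: eq_bigr => i _.
by rewrite scaler_sumr; apply: eq_bigr => j _; rewrite coefZ scalerA mulrA.
Qed.

Lemma skew_mulA_polyC (s g : {poly F}) (c : F) : (s ** g) ** c%:P = s ** (g ** c%:P).
Proof.
apply/polyP => k; rewrite coef_skew_mulr_polyC (coef_skew_mul k (leqnn _) (leqnn _)).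
rewrite (coef_skew_mul k (leqnn _) (size_skew_mulr_polyC g c)) mulr_suml.
apply: eq_bigr => i _; rewrite mulr_suml; apply: eq_bigr => j _.
rewrite coef_skew_mulr_polyC; case: eqP => [<-|_]; last by rewrite !mulr0 mul0r.
by rewrite !mulr1 rmorphM theta_powD mulrA.
Qed.

Lemma skew_mulr_polyCK (c : F) (g : {poly F}) : c != 0 -> (g ** c%:P) ** c^-1%:P = g.
Proof.
move=> c_neq0; apply/polyP => k.
by rewrite !coef_skew_mulr_polyC -mulrA -rmorphM divff // rmorph1 mulr1.
Qed.

Lemma skew_mulBl_polyC (p q : {poly F}) (c : F) :
  (p - q) ** c%:P = p ** c%:P - q ** c%:P.
Proof. by apply/polyP => k; rewrite coefB !coef_skew_mulr_polyC coefB mulrBl. Qed.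

Lemma skew_mul_Xn_polyC (n : nat) (c : F) : 'X^n ** c%:P = tp n c *: 'X^n.
Proof.
apply/polyP => k; rewrite coef_skew_mulr_polyC coefZ coefXn.
by case: eqP => [->|_]; rewrite ?mul1r ?mulr1 ?mul0r ?mulr0.
Qed.

Lemma skew_mul_polyC (a c : F) : a%:P ** c%:P = (a * c)%:P.
Proof. by apply/polyP => -[|k]; rewrite coef_skew_mulr_polyC !coefC ?mul0r. Qed.

Lemma skew_mul_XnsubC (n : nat) (a b : F) : b != 0 ->
  ('X^n - a%:P) ** b%:P = tp n b *: ('X^n - (a * b * tp n b^-1)%:P).
Proof.
move=> b_neq0; have tpb_neq0 : tp n b != 0 by rewrite fmorph_eq0.
rewrite skew_mulBl_polyC skew_mul_Xn_polyC skew_mul_polyC scalerBr scale_polyC.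
by congr (_ - _%:P); rewrite fmorphV [RHS]mulrC divfK.
Qed.

Lemma skew_rdvd_mul2r_polyC (c : F) (g f : {poly F}) : c != 0 ->
  skew_rdvd theta g f <-> skew_rdvd theta (g ** c%:P) (f ** c%:P).
Proof.
move=> c_neq0; split=> -[s def_f]; exists s.
  by rewrite def_f skew_mulA_polyC.
by rewrite -(skew_mulr_polyCK f c_neq0) def_f skew_mulA_polyC skew_mulr_polyCK.
Qed.

Lemma skew_rdvdZr (d : F) (g f : {poly F}) : d != 0 ->
  skew_rdvd theta g (d *: f) <-> skew_rdvd theta g f.
Proof.
move=> d_neq0; split=> -[s def_f].
  by exists (d^-1 *: s); rewrite skew_mulZl -def_f scalerA mulVf ?scale1r.
by exists (d *: s); rewrite skew_mulZl def_f.
Qed.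

End SkewPolynomials.

Theorem proposition4p6 (F : finFieldType) (theta : {rmorphism F -> F})
  (theta_aut : bijective theta) (n : nat) (a b : F)
  (a_neq0 : a != 0) (b_neq0 : b != 0) (g : {poly F}) :
  let ahat := a * b * theta_pow theta n b^-1 in
  skew_rdvd theta g ('X^n - a%:P) <->
  skew_rdvd theta (skew_mul theta g b%:P) ('X^n - ahat%:P).
Proof.
move=> ahat.
apply: iff_trans (skew_rdvd_mul2r_polyC _ _ _ b_neq0) _.
rewrite (skew_mul_XnsubC _ _ _ b_neq0).
by apply: skew_rdvdZr; rewrite fmorph_eq0.
Qed.
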